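(* A $po$-$\Gamma$-semigroup $M$ is regular if and only if for every fuzzy subset $f$ of $M$ we have $f\preceq (f\circ 1)\circ f$.
   Context: Let $M$ and $\Gamma$ be nonempty sets with a map $M\times\Gamma\times M\to M$, $(a,\gamma,b)\mapsto a\gamma b$, satisfying $(a\gamma b)\mu c=a\gamma(b\mu c)$ for all $a,b,c\in M$, $\gamma,\mu\in\Gamma$. A $po$-$\Gamma$-semigroup is such an $M$ with a partial order $\le$ such that $a\le b$ implies $a\gamma c\le b\gamma c$ and $c\gamma a\le c\gamma b$ for all $c\in M$, $\gamma\in\Gamma$. For $H\subseteq M$, $(H]=\{t\in M: t\le h \text{ for some } h\in H\}$; $a\Gamma M\Gamma a=\{a\gamma x\mu a: x\in M,\gamma,\mu\in\Gamma\}$. $M$ is regular if $a\in(a\Gamma M\Gamma a]$ for every $a\in M$. A fuzzy subset of $M$ is a map $M\to[0,1]$; $1$ is the constant fuzzy subset with value $1$. For $c\in M$ let $A_c=\{(y,z)\in M\times M: c\le y\gamma z \text{ for some }\gamma\in\Gamma\}$. $(f\circ g)(c)=\bigvee_{(y,z)\in A_c}\min\{f(y),g(z)\}$ if $A_c\ne\emptyset$, and $0$ otherwise. $f\preceq g$ means $f(c)\le g(c)$ for all $c\in M$. *)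

From HB Require Import structures.
From mathcomp Require Import all_boot all_order all_algebra.
From mathcomp Require Import all_classical all_reals.
From mathcomp Require Import Rstruct.
From Stdlib Require Import Rdefinitions.
Set Implicit Arguments. Unset Strict Implicit. Unset Printing Implicit Defensive.
Import Order.TTheory GRing.Theory Num.Theory.
Local Open Scope classical_set_scope.
Local Open Scope ring_scope.

Section Defs.
Variables (M G : Type) (op : M -> G -> M -> M) (le : M -> M -> Prop).

Definition po_Gamma_semigroup : Prop :=
  [/\ inhabited M, inhabited G,
      (forall (a b c : M) (g m : G), op (op a g b) m c = op a g (op b m c)),
      [/\ (forall a, le a a),
          (forall a b, le a b -> le b a -> a = b) &
          (forall a b c, le a b -> le b c -> le a c)] &
      (forall (a b c : M) (g : G), le a b -> le (op a g c) (op b g c) /\ le (op c g a) (op c g b))].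

Definition down (H : set M) : set M := [set t | exists2 h, H h & le t h].

Definition aGMGa (a : M) : set M := [set t | exists x g m, t = op (op a g x) m a].

Definition regular : Prop := forall a : M, down (aGMGa a) a.

Definition fuzzy (f : M -> R) : Prop := forall x, 0 <= f x <= 1.

Definition one_fz : M -> R := fun _ => 1.

Definition A_c (c : M) : set (M * M) := [set p | exists g, le c (op p.1 g p.2)].

Definition fcomp (f g : M -> R) : M -> R := fun c =>
  if `[< A_c c !=set0 >] then sup [set Num.min (f p.1) (g p.2) | p in A_c c] else 0.

Definition fle (f g : M -> R) : Prop := forall c, f c <= g c.
End Defs.

From Pilot Require Import Defs.
From mathcomp Require Import all_boot all_order all_algebra.
From mathcomp Require Import all_classical all_reals.
From mathcomp Require Import Rstruct.
From Stdlib Require Import Rdefinitions.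
Import Order.TTheory GRing.Theory Num.Theory.
Local Open Scope classical_set_scope.
Local Open Scope ring_scope.

(* If a <= a g x m a, then the pairs (a, x) and (a g x, a) witness
   f a <= ((f o 1) o f)(a).  Conversely, test the inequality on the
   characteristic function of the down-set (a]: its right-hand side at a can
   only be positive through pairs (y, z), (u, v) with a <= y g z, y <= u m v
   and u, z <= a, and then a <= a m v g a, so a is regular. *)

Section FuzzyComposition.
Variables (M G : Type) (op : M -> G -> M -> M) (le : M -> M -> Prop).

Local Notation fcomp := (fcomp op le).
Local Notation A_c := (A_c op le).

Lemma fcomp_le_ub (f g : M -> R) c (b : R) : 0 <= b ->
  (forall p, A_c c p -> Num.min (f p.1) (g p.2) <= b) -> fcomp f g c <= b.
Proof.
move=> b_ge0 ub; rewrite /fcomp; case: asboolP => [[p Ap]|_] //.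
apply: ge_sup; first by exists (Num.min (f p.1) (g p.2)), p.
by move=> _ [q Aq <-]; apply: ub.
Qed.

Lemma min_le_fcomp {f g : M -> R} {c} p : (forall x, f x <= 1) ->
  A_c c p -> Num.min (f p.1) (g p.2) <= fcomp f g c.
Proof.
move=> f_le1 Ap; rewrite /fcomp asboolT; last by exists p.
apply: ub_le_sup; last by exists p.
by exists 1 => _ [q _ <-]; rewrite ge_min f_le1.
Qed.

Lemma fcomp_le1 {f g : M -> R} {c} : (forall x, f x <= 1) -> fcomp f g c <= 1.
Proof. by move=> f_le1; apply: fcomp_le_ub => // p _; rewrite ge_min f_le1. Qed.

Lemma fcomp_le0 (f g : M -> R) c :
  (forall p, A_c c p -> f p.1 <= 0 \/ g p.2 <= 0) -> fcomp f g c <= 0.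
Proof.
move=> vanish; apply: fcomp_le_ub => // p /vanish.
by rewrite ge_min => -[-> | ->]; rewrite ?orbT.
Qed.

Definition down_indicator (a : M) : M -> R :=
  fun x => if `[< le x a >] then 1 else 0.

Lemma fuzzy_down_indicator a : fuzzy (down_indicator a).
Proof. by move=> x; rewrite /down_indicator; case: ifP; rewrite ?lexx ?ler01. Qed.

Lemma down_indicator_le0 a x : ~ le x a -> down_indicator a x <= 0.
Proof. by rewrite /down_indicator => /asboolPn/negbTE ->. Qed.

Hypothesis leM_refl : forall a, le a a.
Hypothesis leM_trans : forall {a b c}, le a b -> le b c -> le a c.
Hypothesis op_mono : forall {a b : M} (c : M) (g : G),
  le a b -> le (op a g c) (op b g c) /\ le (op c g a) (op c g b).

Lemma op_mono2 (a b c d : M) (g : G) :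
  le a b -> le c d -> le (op a g c) (op b g d).
Proof.
move=> ab cd; apply: (leM_trans (proj1 (op_mono c g ab))).
exact: (proj2 (op_mono b g cd)).
Qed.

Lemma down_indicator_self a : down_indicator a a = 1.
Proof. by rewrite /down_indicator asboolT. Qed.

Lemma regular_fle_fcomp : regular op le ->
  forall f : M -> R, fuzzy f -> fle f (fcomp (fcomp f (@one_fz M)) f).
Proof.
move=> reg f f_fuzzy a.
have f_le1 x : f x <= 1 by case/andP: (f_fuzzy x).
have [_ [x [g [m ->]]] a_le] := reg a.
have left_pair : f a <= fcomp f (@one_fz M) (op a g x).
  apply: le_trans (min_le_fcomp (a, x) f_le1 _); last by exists g; apply: leM_refl.
  by rewrite /one_fz le_min lexx f_le1.
apply: le_trans (min_le_fcomp (op a g x, a) (fun y => fcomp_le1 f_le1) _).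
  by rewrite le_min left_pair lexx.
by exists m.
Qed.

Lemma fle_fcomp_down_indicator_regular a :
  fle (down_indicator a)
      (fcomp (fcomp (down_indicator a) (@one_fz M)) (down_indicator a)) ->
  Defs.down le (aGMGa op a) a.
Proof.
move=> f_le; apply: contrapT => a_nreg.
suff : fcomp (fcomp (down_indicator a) (@one_fz M)) (down_indicator a) a <= 0.
  by move/(le_trans (f_le a)); rewrite down_indicator_self ler10.
apply: fcomp_le0 => -[y z] [g /= a_le_yz].
have [z_le|] := pselect (le z a); last by right; apply: down_indicator_le0.
left; apply: fcomp_le0 => -[u v] [m /= y_le_uv].
have [u_le|] := pselect (le u a); last by left; apply: down_indicator_le0.
exfalso; apply: a_nreg; exists (op (op a m v) g a); first by exists v, m, g.
apply: (leM_trans a_le_yz); apply: op_mono2 => //.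
exact: leM_trans y_le_uv (proj1 (op_mono v m u_le)).
Qed.

End FuzzyComposition.

Theorem theorem23 (M G : Type) (op : M -> G -> M -> M) (le : M -> M -> Prop) :
  po_Gamma_semigroup op le ->
  (regular op le <->
   (forall f : M -> R, fuzzy f ->
      fle f (fcomp op le (fcomp op le f (@one_fz M)) f))).
Proof.
case=> _ _ _ [leM_refl _ leM_trans] op_mono; split.
- exact: regular_fle_fcomp.
- move=> fle_fcomp a; apply: fle_fcomp_down_indicator_regular => //.
  exact/fle_fcomp/fuzzy_down_indicator.
Qed.
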